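(* For $\alpha_1,\alpha_2\in\mathbb C$ let $K_1(\alpha_1,\alpha_2)$ be the complex Leibniz algebra with basis $\{l,p_+,p_-,X_1,X_2,X_3\}$ whose only nonzero products are $[l,p_+]=p_+$, $[p_+,l]=-p_+$, $[l,p_-]=-p_-$, $[p_-,l]=p_-$, $[l,l]=\alpha_1X_1$, $[p_+,p_-]=\alpha_2X_1$, $[p_-,p_+]=-\alpha_2X_1$, $[X_1,p_+]=X_2$, $[X_1,p_-]=-X_3$, $[X_2,l]=-X_2$, $[X_3,l]=X_3$. Then every algebra $K_1(\alpha_1,\alpha_2)$ is isomorphic to one of $K_1(1,1)$, $K_1(1,0)$, $K_1(0,1)$, $K_1(0,0)$, and these four algebras are pairwise non-isomorphic.
   Context: A (right) Leibniz algebra is a vector space with a bilinear bracket satisfying $[[x,y],z]=[[x,z],y]+[x,[y,z]]$. *)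

From HB Require Import structures.
From mathcomp Require Import all_boot all_order all_algebra.
From mathcomp Require Import complex.
From mathcomp Require Import reals.
Set Implicit Arguments. Unset Strict Implicit. Unset Printing Implicit Defensive.
Import Order.TTheory GRing.Theory Num.Theory.
Local Open Scope ring_scope.

(* An n-dimensional algebra over a field F is given by its structure
   constants: c i j is the product [e_i, e_j] of basis vectors, expressed as a
   row vector of coordinates. *)
Definition sc_bracket (F : fieldType) (n : nat) (c : 'I_n -> 'I_n -> 'rV[F]_n)
  (u v : 'rV[F]_n) : 'rV[F]_n :=
  \sum_(i < n) \sum_(j < n) (u 0 i * v 0 j) *: c i j.

Definition sc_isomorphic (F : fieldType) (n : nat)
  (c1 c2 : 'I_n -> 'I_n -> 'rV[F]_n) : Prop :=
  exists A : 'M[F]_n, A \in unitmx /\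
    forall u v : 'rV[F]_n, sc_bracket c1 u v *m A = sc_bracket c2 (u *m A) (v *m A).

Definition e6 (F : fieldType) (k : nat) : 'rV[F]_6 := delta_mx 0 (inord k).

(* K_1(a1,a2), basis ordered as  0 = l, 1 = p_+, 2 = p_-, 3 = X_1, 4 = X_2, 5 = X_3 *)
Definition K1 (F : fieldType) (a1 a2 : F) (i j : 'I_6) : 'rV[F]_6 :=
  match nat_of_ord i, nat_of_ord j with
  | 0, 1 => e6 F 1
  | 1, 0 => - e6 F 1
  | 0, 2 => - e6 F 2
  | 2, 0 => e6 F 2
  | 0, 0 => a1 *: e6 F 3
  | 1, 2 => a2 *: e6 F 3
  | 2, 1 => - (a2 *: e6 F 3)
  | 3, 1 => e6 F 4
  | 3, 2 => - e6 F 5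
  | 4, 0 => - e6 F 4
  | 5, 0 => e6 F 5
  | _, _ => 0
  end.

From HB Require Import structures.
From mathcomp Require Import all_boot all_order all_algebra.
From mathcomp Require Import complex.
From mathcomp Require Import reals.
From mathcomp Require Import ring.
Set Implicit Arguments. Unset Strict Implicit. Unset Printing Implicit Defensive.
Import GRing.Theory.
Local Open Scope ring_scope.

(* Rescaling p_+ by d_1 and X_1 by d_3 (hence X_2 by d_1 d_3 and X_3 by d_3) turns
   (alpha_1, alpha_2) into (alpha_1 d_3, alpha_2 d_3 / d_1), which reaches the four
   normal forms.  Conversely, "alpha_1 = 0" and "alpha_2 = 0" are invariants.  The
   plane V = span(X_2, X_3) satisfies [V, K_1] <= V, so no isomorphism phi maps X_1
   into V: otherwise phi X_1, phi X_2 = [phi X_1, phi p_+] and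
   phi X_3 = -[phi X_1, phi p_-] would be three independent vectors of V.  But if
   the target has alpha_1 = 0, all squares [x, x] lie in V, and X_1 = [l, l]/alpha_1
   in the source; if the target has alpha_2 = 0, so do all brackets of vectors
   without l-component, such as the images of p_+ = [l, p_+] and p_- = [p_-, l],
   and X_1 = [p_+, p_-]/alpha_2 in the source. *)

Section StructureConstants.
Variables (F : fieldType) (n : nat).

Lemma sc_bracket_delta (c : 'I_n -> 'I_n -> 'rV[F]_n) (i j : 'I_n) :
  sc_bracket c (delta_mx 0 i) (delta_mx 0 j) = c i j.
Proof.
rewrite /sc_bracket (bigD1 i) //= [X in _ + X]big1 => [|i' ne_i'i]; last first.
  by rewrite big1 // => j' _; rewrite !mxE (negbTE ne_i'i) mul0r scale0r.
rewrite addr0 (bigD1 j) //= big1 => [|j' ne_j'j]; last first.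
  by rewrite !mxE (negbTE ne_j'j) mulr0 scale0r.
by rewrite addr0 !mxE !eqxx mulr1 scale1r.
Qed.

Lemma sc_iso_basis (c1 c2 : 'I_n -> 'I_n -> 'rV[F]_n) (A : 'M[F]_n) :
  (forall u v, sc_bracket c1 u v *m A = sc_bracket c2 (u *m A) (v *m A)) ->
  forall i j, c1 i j *m A = sc_bracket c2 (row i A) (row j A).
Proof. by move=> isoA i j; rewrite !rowE -isoA sc_bracket_delta. Qed.

End StructureConstants.

Lemma det_lower_left_zero (F : fieldType) (m k : nat) (A : 'M[F]_(m + k.+1)) :
  (forall (i : 'I_k.+1) (j : 'I_(m + k.+1)), (j <= m)%N -> A (rshift m i) j = 0) ->
  \det A = 0.
Proof.
move=> A0.
have dlA : dlsubmx A = 0.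
  by apply/matrixP => i j; rewrite !mxE; apply: A0; rewrite /= ltnW.
have drA : \det (drsubmx A) = 0.
  by rewrite (expand_det_col _ 0) big1 // => i _; rewrite !mxE A0 ?mul0r //= addn0.
by rewrite -(submxK A) dlA det_ublock drA mulr0.
Qed.

Section K1.
Variable F : fieldType.

Definition K1_bracket_coord (a1 a2 : F) (x y : 'rV[F]_6) (k : nat) : F :=
  let X n := x 0 (inord n) in
  let Y n := y 0 (inord n) in
  match k with
  | 1 => X 0 * Y 1 - X 1 * Y 0
  | 2 => X 2 * Y 0 - X 0 * Y 2
  | 3 => a1 * (X 0 * Y 0) + a2 * (X 1 * Y 2 - X 2 * Y 1)
  | 4 => X 3 * Y 1 - X 4 * Y 0
  | 5 => X 5 * Y 0 - X 3 * Y 2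
  | _ => 0
  end.

Lemma K1_bracketE (a1 a2 : F) (x y : 'rV[F]_6) :
  sc_bracket (K1 a1 a2) x y = \row_(k < 6) K1_bracket_coord a1 a2 x y k.
Proof.
have liftE m (i : 'I_m) : lift ord0 i = inord i.+1.
  by apply: ord_inj; rewrite lift0 inordK ?ltnS.
have ord0E : ord0 = inord 0 :> 'I_6 by apply/val_inj; rewrite /= inordK.
have eq_inordE (i : 'I_6) n : (n < 6)%N -> (i == inord n) = (val i == n).
  by move=> lt_n6; rewrite -(inj_eq val_inj) /= inordK.
apply/rowP => k; rewrite /sc_bracket !big_ord_recl !big_ord0 !mxE /K1 /=.
rewrite !liftE ord0E !inordK // !eq_inordE //.
by case: k => [[|[|[|[|[|[|k]]]]]] lt_k6] //=; rewrite /K1_bracket_coord /=; ring.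
Qed.

Lemma K1_bracket_coordE (a1 a2 : F) (x y : 'rV[F]_6) (k : nat) : (k < 6)%N ->
  sc_bracket (K1 a1 a2) x y 0 (inord k) = K1_bracket_coord a1 a2 x y k.
Proof. by move=> lt_k6; rewrite K1_bracketE mxE inordK. Qed.

Lemma K1_iso_diag (a1 a2 b1 b2 d1 d3 : F) : d1 != 0 -> d3 != 0 ->
  a1 * d3 = b1 -> a2 * d3 = b2 * d1 -> sc_isomorphic (K1 a1 a2) (K1 b1 b2).
Proof.
move=> d1_neq0 d3_neq0 <- b2E.
pose d : 'rV[F]_6 := \row_(k < 6) [:: 1; d1; 1; d3; d3 * d1; d3]`_k.
exists (diag_mx d); split.
  rewrite unitmxE unitfE det_diag !big_ord_recl big_ord0 !mxE /=.
  by rewrite !mulf_neq0 ?oner_neq0.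
move=> u v; rewrite !mul_mx_diag !K1_bracketE; apply/rowP => k; rewrite !mxE.
case: k => [[|[|[|[|[|[|k]]]]]] lt_k6] //=;
  rewrite /K1_bracket_coord /= ?mxE /= ?inordK //=; try ring.
have -> : b2 = a2 * d3 / d1 by rewrite b2E mulfK.
by field.
Qed.

Lemma K1_classification (a1 a2 : F) :
  sc_isomorphic (K1 a1 a2) (K1 1 1) \/ sc_isomorphic (K1 a1 a2) (K1 1 0) \/
  sc_isomorphic (K1 a1 a2) (K1 0 1) \/ sc_isomorphic (K1 a1 a2) (K1 0 0).
Proof.
have one_neq0 : (1 : F) != 0 := oner_neq0 _.
have [->|a1_neq0] := eqVneq a1 0; have [->|a2_neq0] := eqVneq a2 0.
- by do 3 right; apply: (K1_iso_diag one_neq0 one_neq0); rewrite mul0r.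
- do 2 right; left; apply: (K1_iso_diag one_neq0 (invr_neq0 a2_neq0)).
    by rewrite mul0r.
  by rewrite divff // mulr1.
- right; left; apply: (K1_iso_diag one_neq0 (invr_neq0 a1_neq0)).
    by rewrite divff.
  by rewrite !mul0r.
- left; apply: (K1_iso_diag (d1 := a2 / a1) _ (invr_neq0 a1_neq0)).
  + by rewrite mulf_neq0 ?invr_neq0.
  + by rewrite divff.
  + by rewrite mul1r.
Qed.

Definition in_X23 (v : 'rV[F]_6) : Prop :=
  forall k, (k <= 3)%N -> v 0 (inord k) = 0.

Lemma in_X23Z (c : F) (v : 'rV[F]_6) : c != 0 -> in_X23 (c *: v) -> in_X23 v.
Proof.
move=> c_neq0 cv k le_k3; move: (cv k le_k3).
by rewrite mxE => /eqP; rewrite mulf_eq0 (negbTE c_neq0) => /eqP.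
Qed.

Lemma in_X23_K1_bracketl (b1 b2 : F) (x y : 'rV[F]_6) :
  in_X23 x -> in_X23 (sc_bracket (K1 b1 b2) x y).
Proof.
move=> x23 k le_k3; rewrite K1_bracket_coordE ?(leq_ltn_trans le_k3) //.
by case: k le_k3 => [|[|[|[|k]]]] //= _; rewrite ?x23 //; ring.
Qed.

Lemma K1_bracket_coord0 (b1 b2 : F) (x y : 'rV[F]_6) :
  sc_bracket (K1 b1 b2) x y 0 (inord 0) = 0.
Proof. exact: K1_bracket_coordE. Qed.

Lemma in_X23_K1_sqr (b2 : F) (x : 'rV[F]_6) :
  in_X23 (sc_bracket (K1 0 b2) x x).
Proof.
move=> k le_k3; rewrite K1_bracket_coordE ?(leq_ltn_trans le_k3) //.
by case: k le_k3 => [|[|[|[|k]]]] //= _; ring.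
Qed.

Lemma in_X23_K1_bracket_l0 (b1 : F) (x y : 'rV[F]_6) :
  x 0 (inord 0) = 0 -> y 0 (inord 0) = 0 -> in_X23 (sc_bracket (K1 b1 0) x y).
Proof.
move=> x0 y0 k le_k3; rewrite K1_bracket_coordE ?(leq_ltn_trans le_k3) //.
by case: k le_k3 => [|[|[|[|k]]]] //= _; rewrite x0 y0; ring.
Qed.

Lemma in_X23_rows_not_unitmx (A : 'M[F]_6) :
  in_X23 (row (inord 3) A) -> in_X23 (row (inord 4) A) -> in_X23 (row (inord 5) A) ->
  A \notin unitmx.
Proof.
move=> r3 r4 r5; rewrite unitmxE unitfE negbK; apply/eqP.
apply: (@det_lower_left_zero F 3 2) => i j le_j3.
have -> : j = inord j :> 'I_6 by rewrite inord_val.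
have -> : rshift 3 i = inord (3 + i) :> 'I_6.
  by apply/val_inj; rewrite /= inordK // ltn_add2l.
case: i => [[|[|[|i]]] lt_i3] //.
- by move: (r3 _ le_j3); rewrite mxE.
- by move: (r4 _ le_j3); rewrite mxE.
- by move: (r5 _ le_j3); rewrite mxE.
Qed.

Section Isomorphism.
Variables (a1 a2 b1 b2 : F) (A : 'M[F]_6).
Hypothesis isoA : forall u v,
  sc_bracket (K1 a1 a2) u v *m A = sc_bracket (K1 b1 b2) (u *m A) (v *m A).

Lemma K1_iso_X1_not_in_X23 : A \in unitmx -> ~ in_X23 (row (inord 3) A).
Proof.
move=> unitA r3; apply: (negP (in_X23_rows_not_unitmx r3 _ _)) unitA.
  have := sc_iso_basis isoA (inord 3) (inord 1); rewrite /K1 !inordK // /e6 -rowE => ->.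
  exact: in_X23_K1_bracketl.
apply: (@in_X23Z (-1)); first by rewrite oppr_eq0 oner_neq0.
have := sc_iso_basis isoA (inord 3) (inord 2); rewrite /K1 !inordK // mulNmx /e6 -rowE scaleN1r => ->.
exact: in_X23_K1_bracketl.
Qed.

Lemma K1_iso_p_coord0 : [/\ row (inord 1) A 0 (inord 0) = 0 &
                            row (inord 2) A 0 (inord 0) = 0].
Proof.
split.
  have := sc_iso_basis isoA (inord 0) (inord 1); rewrite /K1 !inordK // /e6 -rowE => ->.
  exact: K1_bracket_coord0.
have := sc_iso_basis isoA (inord 2) (inord 0); rewrite /K1 !inordK // /e6 -rowE => ->.
exact: K1_bracket_coord0.
Qed.

End Isomorphism.

Lemma K1_not_iso_a1 (a1 a2 b2 : F) : a1 != 0 -> ~ sc_isomorphic (K1 a1 a2) (K1 0 b2).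
Proof.
move=> a1_neq0 [A [unitA isoA]].
apply: (K1_iso_X1_not_in_X23 isoA unitA) (in_X23Z a1_neq0 _).
have := sc_iso_basis isoA (inord 0) (inord 0); rewrite /K1 !inordK // -scalemxAl /e6 -rowE => ->.
exact: in_X23_K1_sqr.
Qed.

Lemma K1_not_iso_a2 (a1 a2 b1 : F) : a2 != 0 -> ~ sc_isomorphic (K1 a1 a2) (K1 b1 0).
Proof.
move=> a2_neq0 [A [unitA isoA]].
apply: (K1_iso_X1_not_in_X23 isoA unitA) (in_X23Z a2_neq0 _).
have [r1 r2] := K1_iso_p_coord0 isoA.
have := sc_iso_basis isoA (inord 1) (inord 2); rewrite /K1 !inordK // -scalemxAl /e6 -rowE => ->.
exact: in_X23_K1_bracket_l0 r1 r2.
Qed.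

End K1.

Theorem mainTheorem3 (R : realType) :
  (forall a1 a2 : R[i],
     sc_isomorphic (K1 a1 a2) (K1 1 1) \/ sc_isomorphic (K1 a1 a2) (K1 1 0) \/
     sc_isomorphic (K1 a1 a2) (K1 0 1) \/ sc_isomorphic (K1 a1 a2) (K1 0 0)) /\
  ~ sc_isomorphic (K1 (1 : R[i]) 1) (K1 1 0) /\
  ~ sc_isomorphic (K1 (1 : R[i]) 1) (K1 0 1) /\
  ~ sc_isomorphic (K1 (1 : R[i]) 1) (K1 0 0) /\
  ~ sc_isomorphic (K1 (1 : R[i]) 0) (K1 0 1) /\
  ~ sc_isomorphic (K1 (1 : R[i]) 0) (K1 0 0) /\
  ~ sc_isomorphic (K1 (0 : R[i]) 1) (K1 0 0).
Proof.
have one_neq0 : (1 : R[i]) != 0 := oner_neq0 _.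
split; first exact: K1_classification.
split; first exact: K1_not_iso_a2 one_neq0.
split; first exact: K1_not_iso_a1 one_neq0.
split; first exact: K1_not_iso_a1 one_neq0.
split; first exact: K1_not_iso_a1 one_neq0.
split; first exact: K1_not_iso_a1 one_neq0.
exact: K1_not_iso_a2 one_neq0.
Qed.
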